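(* Let $\varphi$ be an automorphism of the Grassmann algebra $E$ with $\varphi^{2}=\mathrm{id}_E$, and let $\beta=\{e_1,e_2,\ldots\}$ be a basis of $L$ (the generators of $E$). Put $I_\beta=\{n\in\mathbb{N}\mid \varphi(e_n)=\pm e_n\}$. Suppose that $I_\beta$ is infinite and $I_\beta\neq\mathbb{N}$. Then $\varphi$ is of canonical type, i.e. $\varphi(E_{(0)})=E_{(0)}$ and $\varphi(E_{(1)})=E_{(1)}$.
   Context: $F$ is a field of characteristic zero, $L$ is an infinite-dimensional $F$-vector space with basis $e_1,e_2,\ldots$, and $E$ is the Grassmann (exterior) algebra of $L$: it has basis $1$ and the monomials $e_{i_1}\cdots e_{i_k}$ with $i_1<\cdots<i_k$, $k\ge1$, with $e_ie_j=-e_je_i$. The natural grading $E_{can}=E_{(0)}\oplus E_{(1)}$ has $E_{(0)}$ spanned by $1$ and the monomials of even length and $E_{(1)}$ spanned by the monomials of odd length. An automorphism $\varphi$ of $E$ with $\varphi^2=\mathrm{id}$ is of canonical type if $\varphi(E_{(0)})=E_{(0)}$ and $\varphi(E_{(1)})=E_{(1)}$. *)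

(* An element of E is represented by its coefficient function on monomials
   e_S (S a finite set of indices); genuine elements of E are those with
   finite support ([gfin]). *)
From HB Require Import structures.
From mathcomp Require Import all_boot all_order all_algebra.
From mathcomp Require Import finmap.
Set Implicit Arguments. Unset Strict Implicit. Unset Printing Implicit Defensive.
Import GRing.Theory.
Local Open Scope ring_scope.


Definition grass (F : fieldType) := {fset nat} -> F.

Definition gfin (F : fieldType) (x : grass F) : Prop :=
  exists N : nat, forall S : {fset nat}, x S != 0 -> forall i, i \in S -> (i < N)%N.

Definition gmon (F : fieldType) (S : {fset nat}) : grass F :=
  fun T => if T == S then 1 else 0.
Definition gen (F : fieldType) (n : nat) : grass F := gmon F [fset n]%fset.
Definition gzero (F : fieldType) : grass F := fun _ => 0.
Definition gone (F : fieldType) : grass F := gmon F fset0%fset.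
Definition gadd (F : fieldType) (x y : grass F) : grass F := fun S => x S + y S.
Definition gscale (F : fieldType) (a : F) (x : grass F) : grass F := fun S => a * x S.

Definition inv_count (S T : {fset nat}) : nat :=
  (\sum_(s <- S) size [seq t <- (T : seq nat) | (t < s)%N])%N.

(* e_S e_T = (-1)^(inv_count S T) e_(S u T) if S, T disjoint, 0 otherwise *)
Definition gmul (F : fieldType) (x y : grass F) : grass F :=
  fun U => \sum_(S <- fpowerset U)
             (-1) ^+ inv_count S (U `\` S)%fset * x S * y (U `\` S)%fset.

Definition glin (F : fieldType) (s : seq nat) (c : nat -> F) (b : nat -> grass F)
  : grass F := fun S => \sum_(i <- s) c i * b i S.

Definition in_L (F : fieldType) (x : grass F) : Prop :=
  gfin x /\ forall S : {fset nat}, #|` S|%fset != 1%N -> x S = 0.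
Definition in_E0 (F : fieldType) (x : grass F) : Prop :=
  gfin x /\ forall S : {fset nat}, odd #|` S|%fset -> x S = 0.
Definition in_E1 (F : fieldType) (x : grass F) : Prop :=
  gfin x /\ forall S : {fset nat}, ~~ odd #|` S|%fset -> x S = 0.

Definition involutive_aut (F : fieldType) (phi : grass F -> grass F) : Prop :=
  (forall x, gfin x -> gfin (phi x)) /\
  [/\ forall x y, gfin x -> gfin y -> phi (gadd x y) = gadd (phi x) (phi y),
      forall a x, gfin x -> phi (gscale a x) = gscale a (phi x),
      forall x y, gfin x -> gfin y -> phi (gmul x y) = gmul (phi x) (phi y),
      phi (gone F) = gone F &
      forall x, gfin x -> phi (phi x) = x].

Definition basis_of_L (F : fieldType) (b : nat -> grass F) : Prop :=
  [/\ forall n, in_L (b n),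
      forall (s : seq nat) (c : nat -> F), uniq s -> glin s c b = gzero F ->
        forall i, i \in s -> c i = 0 &
      forall x, in_L x -> exists (s : seq nat) (c : nat -> F), x = glin s c b].

Definition maps_onto (F : fieldType) (phi : grass F -> grass F)
  (P : grass F -> Prop) : Prop :=
  (forall x, P x -> P (phi x)) /\ (forall y, P y -> exists2 x, P x & phi x = y).

Definition canonical_type (F : fieldType) (phi : grass F -> grass F) : Prop :=
  maps_onto phi (@in_E0 F) /\ maps_onto phi (@in_E1 F).

Definition I_beta (F : fieldType) (phi : grass F -> grass F) (b : nat -> grass F)
  (n : nat) : Prop :=
  phi (b n) = b n \/ phi (b n) = gscale (-1) (b n).

From mathcomp Require Import all_boot all_order all_algebra.
From mathcomp Require Import finmap.
From mathcomp Require Import ring.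
From Stdlib Require Import FunctionalExtensionality.
Set Implicit Arguments. Unset Strict Implicit. Unset Printing Implicit Defensive.
Import GRing.Theory.

(* Even elements of E are central. For even x, phi x therefore commutes with
   phi (phi e_M) = e_M; choosing M beyond the support of phi x, the odd part of
   phi x anticommutes with e_M, so (char 0) it annihilates e_M, and an element
   annihilating a generator that does not occur in it is 0.
   For odd x and n in I_beta, x anticommutes with b_n, so phi x anticommutes
   with phi b_n = +-b_n and the even part of phi x annihilates b_n.  If that even
   part were nonzero and supported on e_0, ..., e_(M-1), every b_n with n in
   I_beta would lie in the span of e_0, ..., e_(M-1), contradicting the
   independence of infinitely many of them.  Surjectivity onto E_(0) and E_(1)
   comes from phi^2 = id. *)

Lemma sum_count_ltn_sym (s t : seq nat) : all [predC t] s ->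
  (\sum_(a <- s) count (ltn^~ a) t + \sum_(a <- t) count (ltn^~ a) s
   = size s * size t)%N.
Proof.
elim: s => [|a s IH] /=; first by rewrite big_nil big1.
case/andP=> /= at_ /IH {}IH; rewrite big_cons /=.
rewrite big_split /= -(big_mkcond xpredT) -big_mkcond /= sum1_count.
have -> : count (ltn a) t = count (predC (ltn^~ a)) t.
  apply: eq_in_count => c ct /=; rewrite -leqNgt [RHS]leq_eqVlt.
  by case: (eqVneq a c) => [ac|//]; rewrite ac ct in at_.
by rewrite addnACA count_predC mulSn -IH.
Qed.

Lemma unbounded_uniq_seq (P : nat -> Prop) :
  (forall N, exists2 n, (N <= n)%N & P n) ->
  forall k, exists2 s : seq nat, uniq s /\ size s = k & forall n, n \in s -> P n.
Proof.
move=> Punb; elim=> [|k [s [us sk] sP]]; first by exists [::].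
have [n max_n Pn] := Punb (\max_(i <- s) i).+1.
have ns : n \notin s.
  apply/negP => /(@leq_bigmax_seq _ _ xpredT id) /(_ isT).
  by move/(leq_trans max_n); rewrite ltnn.
by exists (n :: s) => [|m]; [rewrite /= ns us sk | rewrite inE => /predU1P[->|/sP]].
Qed.

Local Open Scope fset_scope.
Local Open Scope ring_scope.

Lemma inv_count_sym (S T : {fset nat}) : [disjoint S & T] ->
  (inv_count S T + inv_count T S = #|` S| * #|` T|)%N.
Proof.
move/fdisjointP=> ST; rewrite /inv_count.
under eq_bigr do rewrite size_filter; under [X in (_ + X)%N]eq_bigr do rewrite size_filter.
by apply: sum_count_ltn_sym; apply/allP.
Qed.

Lemma sign_inv_count_swap (R : ringType) (S T : {fset nat}) : [disjoint S & T] ->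
  (-1) ^+ inv_count T S = (-1) ^+ (#|` S| * #|` T|) * (-1) ^+ inv_count S T :> R.
Proof.
move=> ST; rewrite -(inv_count_sym ST) -!exprD.
by rewrite -[LHS]signr_odd -[RHS]signr_odd !oddD; case: odd; case: odd.
Qed.

Lemma fpowerset_perm_fsetD (U : {fset nat}) :
  perm_eq (fpowerset U) (map (fsetD U) (fpowerset U)).
Proof.
apply: uniq_perm; rewrite ?fset_uniq //.
  rewrite map_inj_in_uniq ?fset_uniq // => A B.
  by rewrite !fpowersetE => AU BU eAB; rewrite -(fsetDK AU) eAB fsetDK.
move=> S; apply/idP/mapP => [|[A _ ->]]; last by rewrite fpowersetE fsubsetDl.
rewrite fpowersetE => SU; exists (U `\` S); last by rewrite fsetDK.
by rewrite fpowersetE fsubsetDl.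
Qed.

Section GrassmannAlgebra.
Variable F : fieldType.
Implicit Types (x y v w : grass F) (S T U : {fset nat}).

Lemma gmul_graded_comm x y (e : F) :
  (forall S T, x S != 0 -> y T != 0 -> (-1) ^+ (#|` S| * #|` T|) = e) ->
  gmul y x = gscale e (gmul x y).
Proof.
move=> xy; apply: functional_extensionality => U.
rewrite /gmul /gscale (perm_big _ (fpowerset_perm_fsetD U)) big_map big_distrr /=.
apply: eq_big_seq => S; rewrite fpowersetE => SU; rewrite fsetDK //.
have [->|xS] := eqVneq (x S) 0; first by rewrite !(mulr0, mul0r).
have [->|yS] := eqVneq (y (U `\` S)) 0; first by rewrite !(mulr0, mul0r).
have dS : [disjoint S & U `\` S] by apply/fdisjointP => i iS; rewrite in_fsetD iS.
rewrite sign_inv_count_swap // (xy _ _ xS yS); ring.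
Qed.

Definition gbounded x (N : nat) :=
  forall S, x S != 0 -> forall i, i \in S -> (i < N)%N.

Lemma gbounded_gmul x y M N :
  gbounded x M -> gbounded y N -> gbounded (gmul x y) (maxn M N).
Proof.
move=> xM yN U nz i iU.
have /hasP[S _] : has (fun S => (-1) ^+ inv_count S (U `\` S) * x S * y (U `\` S) != 0)
                  (fpowerset U).
  apply: contraNT nz => /hasPn xy0; apply/eqP/big1_seq => S /andP[_ /xy0].
  by rewrite negbK => /eqP.
rewrite /= !mulf_eq0 !negb_or => /andP[/andP[_ xS] yS].
have [iS|iS] := boolP (i \in S); first by rewrite leq_max (xM _ xS _ iS).
by rewrite leq_max (yN _ yS) ?orbT // in_fsetD iS.
Qed.

Lemma gfin_gmul x y : gfin x -> gfin y -> gfin (gmul x y).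
Proof. by move=> [M xM] [N yN]; exists (maxn M N); apply: gbounded_gmul. Qed.

Lemma gmul_addl x y w : gmul (gadd x y) w = gadd (gmul x w) (gmul y w).
Proof.
apply: functional_extensionality => U; rewrite /gmul /gadd -big_split.
by apply: eq_bigr => S _ /=; ring.
Qed.

Lemma gmul_addr x y w : gmul w (gadd x y) = gadd (gmul w x) (gmul w y).
Proof.
apply: functional_extensionality => U; rewrite /gmul /gadd -big_split.
by apply: eq_bigr => S _ /=; ring.
Qed.

Lemma gmul_scalel (c : F) x w : gmul (gscale c x) w = gscale c (gmul x w).
Proof.
apply: functional_extensionality => U; rewrite /gmul /gscale big_distrr.
by apply: eq_bigr => S _ /=; ring.
Qed.

Lemma gmul_scaler (c : F) x w : gmul w (gscale c x) = gscale c (gmul w x).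
Proof.
apply: functional_extensionality => U; rewrite /gmul /gscale big_distrr.
by apply: eq_bigr => S _ /=; ring.
Qed.

Lemma gen_in_L n : in_L (gen F n).
Proof.
rewrite /gen /gmon; split=> [|S].
  by exists n.+1 => S; case: (S =P [fset n]) => [-> _ i /fset1P ->|_] //; rewrite eqxx.
by case: (S =P [fset n]) => // ->; rewrite cardfs1.
Qed.

Lemma gen_fset1 n : gen F n [fset n] = 1.
Proof. by rewrite /gen /gmon eqxx. Qed.

Lemma in_L_supp v S : in_L v -> v S != 0 -> #|` S| = 1%N.
Proof. by case=> _ v1; apply: contraNeq => /v1 ->. Qed.

Lemma gmul_even_comm x y : (forall S, odd #|` S| -> x S = 0) -> gmul y x = gmul x y.
Proof.
move=> x_even; rewrite (@gmul_graded_comm _ _ 1) => [|S T xS _].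
  by apply: functional_extensionality => U; rewrite /gscale mul1r.
by rewrite -signr_odd oddM; case: (boolP (odd _)) xS => // /x_even ->; rewrite eqxx.
Qed.

Lemma gmul_odd_L_anticomm x v : (forall S, ~~ odd #|` S| -> x S = 0) -> in_L v ->
  gmul x v = gscale (-1) (gmul v x).
Proof.
move=> x_odd vL; apply: gmul_graded_comm => S T /(in_L_supp vL) -> xT.
by rewrite mul1n -signr_odd; case: (boolP (odd _)) xT => // /x_odd ->; rewrite eqxx.
Qed.

Definition geven x : grass F := fun S => if odd #|` S| then 0 else x S.
Definition godd x : grass F := fun S => if odd #|` S| then x S else 0.

Lemma gadd_geven_godd x : gadd (geven x) (godd x) = x.
Proof.
apply: functional_extensionality => S; rewrite /gadd /geven /godd.
by case: odd; rewrite ?add0r ?addr0.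
Qed.

Lemma gbounded_geven x N : gbounded x N -> gbounded (geven x) N.
Proof. by move=> xN S; rewrite /geven; case: odd; [rewrite eqxx | apply: xN]. Qed.

Lemma gbounded_godd x N : gbounded x N -> gbounded (godd x) N.
Proof. by move=> xN S; rewrite /godd; case: odd; [apply: xN | rewrite eqxx]. Qed.

Lemma gmul_L_parity w v U : in_L v ->
  gmul w v U = gmul (geven w) v U + gmul (godd w) v U /\
  gmul v w U = gmul (geven w) v U - gmul (godd w) v U.
Proof.
move=> vL; have wE := gadd_geven_godd w.
split; rewrite -{1}wE ?gmul_addl ?gmul_addr //.
rewrite /gadd (gmul_even_comm v) => [|S]; last by rewrite /geven => ->.
rewrite (@gmul_odd_L_anticomm (godd w) _ _ vL) => [|S]; last by rewrite /godd => /negbTE ->.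
by rewrite /gscale mulN1r opprK.
Qed.

(* The coefficient of a * v at S `|` [fset j] is +-(a S * v [fset j]). *)
Lemma gmul_fresh_eq0 a v M j : gbounded a M -> in_L v -> (M <= j)%N ->
  v [fset j] != 0 -> gmul a v = gzero F -> a = gzero F.
Proof.
move=> aM vL Mj vj av0; apply: functional_extensionality => S.
apply/eqP; apply: contraT => aS.
have fresh T : a T != 0 -> j \notin T.
  by move=> aT; apply/negP => /(aM _ aT); rewrite ltnNge Mj.
set U := S `|` [fset j].
have US : U `\` S = [fset j].
  by rewrite fsetDUl fsetDv fset0U; apply/fsetDidPl; rewrite fdisjoint1X fresh.
have Uj : U `\` [fset j] = S.
  by rewrite fsetDUl fsetDv fsetU0; apply/fsetDidPl; rewrite fdisjointX1 fresh.
have onlyS T : T `<=` U -> a T != 0 -> v (U `\` T) != 0 -> T = S.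
  move=> TU aT /(in_L_supp vL)/eqP/cardfs1P[t UTt].
  have : j \in U `\` T by rewrite in_fsetD (negbTE (fresh _ aT)) in_fsetU fset11 orbT.
  by rewrite UTt => /fset1P jt; rewrite -(fsetDK TU) UTt -jt Uj.
move: (congr1 (@^~ U) av0); rewrite /gmul /gzero (bigD1_seq S) ?fset_uniq //=; last first.
  by rewrite fpowersetE fsubsetUl.
rewrite big1_seq ?addr0 => [|T /andP[TS]]; last first.
  rewrite fpowersetE => TU.
  have [->|aT] := eqVneq (a T) 0; first by rewrite mulr0 mul0r.
  have [->|vT] := eqVneq (v (U `\` T)) 0; first by rewrite mulr0.
  by rewrite (onlyS _ TU aT vT) eqxx in TS.
by move/eqP; rewrite US !mulf_eq0 signr_eq0 (negbTE aS) (negbTE vj).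
Qed.

Lemma left_kernel_neq0 m n (A : 'M[F]_(m, n)) : (n < m)%N ->
  exists2 u : 'rV_m, u != 0 & u *m A = 0.
Proof.
move=> nm; have /rowV0Pn[u /sub_kermxP uA u0] : kermx A != 0.
  by rewrite kermx_eq0 /row_free (ltn_eqF (leq_ltn_trans (rank_leq_col A) nm)).
by exists u.
Qed.

Definition coords_lt x (M : nat) := forall j, (M <= j)%N -> x [fset j] = 0.

Lemma basis_coords_lt_size b (s : seq nat) M : basis_of_L b -> uniq s ->
  (forall n, n \in s -> coords_lt (b n) M) -> (size s <= M)%N.
Proof.
move=> [bL b_free _] us sM; rewrite leqNgt; apply/negP => Ms.
pose A := \matrix_(k < size s, j < M) b (nth 0%N s k) [fset (j : nat)].
have [u u0 uA] := left_kernel_neq0 A Ms.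
pose c n := \sum_(k < size s | nth 0%N s k == n) u 0 k.
have cE (k : 'I_(size s)) : c (nth 0%N s k) = u 0 k.
  by rewrite /c (big_pred1 k) // => k'; rewrite /= nth_uniq.
have lin0 : glin s c b = gzero F.
  apply: functional_extensionality => S; rewrite /glin /gzero (big_nth 0%N) big_mkord.
  under eq_bigr => k _ do rewrite cE.
  have [/eqP/cardfs1P[j ->]|S1] := eqVneq #|` S| 1%N; last first.
    by rewrite big1 // => k _; rewrite (proj2 (bL _)) ?mulr0.
  have [jM|Mj] := ltnP j M; last by rewrite big1 // => k _; rewrite sM ?mulr0 ?mem_nth.
  have := congr1 (fun B : 'M_(1, M) => B 0 (Ordinal jM)) uA; rewrite !mxE => uA0.
  by rewrite -[RHS]uA0; apply: eq_bigr => k _; rewrite mxE.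
move/negP: u0; apply; apply/eqP/rowP => k; rewrite mxE -cE.
exact: b_free lin0 _ (mem_nth 0%N (ltn_ord k)).
Qed.

Lemma gscale_inj (c : F) x y : c != 0 -> gscale c x = gscale c y -> x = y.
Proof.
move=> c0 cxy; apply: functional_extensionality => U.
by apply: (mulfI c0); move: (congr1 (@^~ U) cxy).
Qed.

Section CharacteristicZero.
Hypothesis charF0 : [pchar F] =i pred0.

Lemma double_eq0 (a : F) : a + a = 0 -> a = 0.
Proof.
move=> /eqP; rewrite -mulr2n -mulr_natl mulf_eq0 => /orP[|/eqP //].
by rewrite ((pcharf0P F).1 charF0).
Qed.

Lemma godd_gmul_L_eq0 w v : in_L v ->
  gmul w v = gmul v w -> gmul (godd w) v = gzero F.
Proof.
move=> vL wv; apply: functional_extensionality => U.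
have [wvU vwU] := gmul_L_parity w U vL; move: (congr1 (@^~ U) wv).
rewrite wvU vwU => /addrI /eqP; rewrite -subr_eq0 opprK => /eqP.
exact: double_eq0.
Qed.

Lemma geven_gmul_L_eq0 w v : in_L v ->
  gmul w v = gscale (-1) (gmul v w) -> gmul (geven w) v = gzero F.
Proof.
move=> vL wv; apply: functional_extensionality => U.
have [wvU vwU] := gmul_L_parity w U vL; move: (congr1 (@^~ U) wv).
rewrite /gscale wvU vwU mulN1r opprB addrC => /addrI /eqP.
by rewrite -subr_eq0 opprK => /eqP; apply: double_eq0.
Qed.

Section InvolutiveAutomorphism.
Variable phi : grass F -> grass F.
Hypothesis phiA : involutive_aut phi.

Lemma maps_onto_involutive (P : grass F -> Prop) :
  (forall x, P x -> gfin x) -> (forall x, P x -> P (phi x)) -> maps_onto phi P.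
Proof.
have [_ [_ _ _ _ phiK]] := phiA; move=> Pfin Pphi; split=> // y Py.
by exists (phi y); [apply: Pphi | apply: phiK; apply: Pfin].
Qed.

Lemma phi_in_E0 x : in_E0 x -> in_E0 (phi x).
Proof.
have [phi_fin [_ _ phiM _ phiK]] := phiA.
move=> [xfin x_even]; have [M phixM] := phi_fin _ xfin.
split; first exact: phi_fin.
have gL := gen_in_L M; have gfin := gL.1.
have comm : gmul (phi x) (gen F M) = gmul (gen F M) (phi x).
  have xg := gmul_even_comm (phi (gen F M)) x_even.
  by rewrite -(phiK _ gfin) -!phiM ?xg //; apply: phi_fin.
have := gmul_fresh_eq0 (gbounded_godd phixM) gL (leqnn M).
rewrite gen_fset1 oner_neq0 => /(_ isT (godd_gmul_L_eq0 gL comm)) godd0.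
by move=> S oS; have := congr1 (@^~ S) godd0; rewrite /godd oS.
Qed.

Lemma phi_in_E1 b x : basis_of_L b ->
  (forall N, exists2 n, (N <= n)%N & I_beta phi b n) -> in_E1 x -> in_E1 (phi x).
Proof.
have [phi_fin [_ phiZ phiM _ _]] := phiA.
move=> bB Iunb [xfin x_odd]; have [M phixM] := phi_fin _ xfin.
split; first exact: phi_fin.
have [bL _ _] := bB.
have anticomm n : I_beta phi b n -> gmul (geven (phi x)) (b n) = gzero F.
  move=> In; apply: geven_gmul_L_eq0 (bL n) _; have bfin := (bL n).1.
  have : gmul (phi x) (phi (b n)) = gscale (-1) (gmul (phi (b n)) (phi x)).
    by rewrite -!phiM // (gmul_odd_L_anticomm x_odd (bL n)) phiZ //; apply: gfin_gmul.
  case: In => -> //; rewrite gmul_scaler gmul_scalel => /gscale_inj; apply.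
  by rewrite oppr_eq0 oner_eq0.
move=> S S_even; have <- : geven (phi x) S = phi x S by rewrite /geven (negbTE S_even).
apply/eqP; apply: contraT => phixS.
have coords n : I_beta phi b n -> coords_lt (b n) M.
  move=> In j Mj; apply/eqP; apply: contraT => bnj.
  have := gmul_fresh_eq0 (gbounded_geven phixM) (bL n) Mj bnj (anticomm n In).
  by move/(congr1 (@^~ S)); rewrite /gzero => /eqP; rewrite (negbTE phixS).
have [s [us sM] sI] := unbounded_uniq_seq Iunb M.+1.
have := basis_coords_lt_size bB us (fun n ns => coords n (sI n ns)).
by rewrite sM ltnn.
Qed.

End InvolutiveAutomorphism.
End CharacteristicZero.
End GrassmannAlgebra.

Theorem mainTheorem1 (F : fieldType) (charF0 : [pchar F] =i pred0)
  (phi : grass F -> grass F) (b : nat -> grass F) :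
  involutive_aut phi ->
  basis_of_L b ->
  (forall N : nat, exists2 n : nat, (N <= n)%N & I_beta phi b n) ->
  (exists n : nat, ~ I_beta phi b n) ->
  canonical_type phi.
Proof.
move=> phiA bB Iunb _; split; apply: maps_onto_involutive => // x.
- by case.
- exact: phi_in_E0.
- by case.
- exact: phi_in_E1 bB Iunb.
Qed.
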